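(* Let $m=O(1)$ be fixed. For the rectangular grid graph $G_{m,n}=P_m\times P_n$ and the cylindrical grid graph $C_{m,n}=P_m\times C_n$, the fraction of balanced $k$-partitions $Z_{\mu^{\mathrm{balanced}}_k}/Z_{\mu^*_k}$ is lower bounded by $\Omega\!\left(\frac{1}{n^{k-1}\Theta(1)^k}\right)$ and $\Omega\!\left(\frac{1}{n^{k}\Theta(1)^k}\right)$, respectively.
   Context: $P_n$ is the path on $n$ vertices, $C_n$ the cycle on $n$ vertices, and $G\times H$ the Cartesian product graph (vertices $(u,v)$, edges joining $(u,v),(u',v)$ for $uu'\in E(G)$ and $(u,v),(u,v')$ for $vv'\in E(H)$). For a graph $G$ and $k$, the spanning tree distribution assigns to a partition $(P_1,\dots,P_k)$ of $V(G)$ into $k$ parts the weight $\mu^*_k(P_1,\dots,P_k)=\prod_{i=1}^kT(P_i)$, where $T(P_i)$ is the number of spanning trees of $G[P_i]$; $Z_{\mu^*_k}$ is the sum of these weights over all partitions. $Z_{\mu^{\mathrm{balanced}}_k}$ is the same sum restricted to balanced partitions, i.e. those with $|P_1|=\dots=|P_k|$. Asymptotics are as $n\to\infty$, with constants depending on $m$. *)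

From mathcomp Require Import all_boot all_order all_algebra.
Set Implicit Arguments. Unset Strict Implicit. Unset Printing Implicit Defensive.
Import Order.TTheory GRing.Theory Num.Theory.

Definition path_adj (n : nat) : rel 'I_n :=
  fun i j => (i.+1 == j :> nat) || (j.+1 == i :> nat).

Definition cycle_adj (n : nat) : rel 'I_n :=
  fun i j => (i != j) && (((i.+1 %% n) == j :> nat) || ((j.+1 %% n) == i :> nat)).

Arguments path_adj n : clear implicits.
Arguments cycle_adj n : clear implicits.

Definition cart_adj (A B : finType) (G : rel A) (H : rel B) : rel (A * B) :=
  fun x y => ((x.1 == y.1) && H x.2 y.2) || ((x.2 == y.2) && G x.1 y.1).

Definition grid_graph (m n : nat) : rel ('I_m * 'I_n) :=
  cart_adj (path_adj m) (path_adj n).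
Definition cyl_graph (m n : nat) : rel ('I_m * 'I_n) :=
  cart_adj (path_adj m) (cycle_adj n).
Arguments grid_graph m n : clear implicits.
Arguments cyl_graph m n : clear implicits.

Section SpanningTrees.
Variable V : finType.
Variable G : rel V.

Definition induced_edge (P : {set V}) (e : {set V}) : bool :=
  [exists u, exists v,
     [&& e == [set u; v], G u v, u \in P & v \in P]].

Definition Fconnect (F : {set {set V}}) : rel V :=
  connect (fun a b => [set a; b] \in F).

(* F is (the edge set of) a spanning tree of G[P]: F consists of edges of
   G[P], the graph (P, F) is connected, and it is acyclic (every edge of F
   is a bridge of (P, F)). *)
Definition spanning_tree (P : {set V}) (F : {set {set V}}) : bool :=
  [&& [forall e in F, induced_edge P e],
      [forall x in P, forall y in P, Fconnect F x y] &
      [forall u, forall v,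
         ([set u; v] \in F) ==> ~~ Fconnect (F :\ [set u; v]) u v]].

Definition num_spanning_trees (P : {set V}) : nat :=
  #|[set F : {set {set V}} | spanning_tree P F]|.

(* k-partitions (P_1, ..., P_k) of V into nonempty parts, encoded by the
   labelling f : V -> 'I_k with P_i = f^{-1}(i). *)
Definition part (k : nat) (f : {ffun V -> 'I_k}) (i : 'I_k) : {set V} :=
  [set x | f x == i].

Definition is_kpartition (k : nat) (f : {ffun V -> 'I_k}) : bool :=
  [forall i, part f i != set0].

Definition is_balanced (k : nat) (f : {ffun V -> 'I_k}) : bool :=
  [forall i, forall j, #|part f i| == #|part f j|].

Definition tree_weight (k : nat) (f : {ffun V -> 'I_k}) : nat :=
  \prod_(i < k) num_spanning_trees (part f i).

Definition Z_tree (k : nat) : nat :=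
  \sum_(f : {ffun V -> 'I_k} | is_kpartition f) tree_weight f.

Definition Z_balanced (k : nat) : nat :=
  \sum_(f : {ffun V -> 'I_k} | is_kpartition f && is_balanced f) tree_weight f.

End SpanningTrees.

Definition balanced_fraction (V : finType) (G : rel V) (k : nat) : rat :=
  ((Z_balanced G k)%:R / (Z_tree G k)%:R)%R.

From mathcomp Require Import all_boot all_order all_algebra.
From mathcomp Require Import zify.
Import Order.TTheory GRing.Theory Num.Theory.
Set Implicit Arguments. Unset Strict Implicit. Unset Printing Implicit Defensive.

(* Order the vertices along the boustrophedon Hamiltonian path of the grid
   (the snake) and let f0 be the balanced partition into k blocks of
   s = mn/k consecutive vertices.  Every edge joins two vertices less than 2m
   apart along the snake, except, on the cylinder, edges between its two ends.
   Let U be the union of the spanning trees of a k-partition; it is a forest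
   with k components.  Greedily extend the edges of U lying inside blocks,
   then the inner edges near block boundaries, and then all inner edges, to a
   spanning forest T of the blocks.  Since the near inner edges together with
   the k - 1 edges joining consecutive blocks (and, on the cylinder, the edge
   joining the two ends of the snake) reconnect the endpoints of every edge of
   U that leaves a block, T has at most k - 1 (resp. k) edges outside U away
   from the boundaries.  So the partition and U are recovered from T, the
   O(km) edges of U near boundaries, at most k - 1 (resp. k) further edges
   among O(mn), and a labelling of the k components of U; this gives
   Z_tree <= n^(k-1) C^k Z_balanced (resp. n^k C^k Z_balanced). *)

Section Forests.
Variable V : finType.
Implicit Types (F B J : {set {set V}}) (a b u v x y z : V).

Lemma set2C a b : [set a; b] = [set b; a].
Proof. exact: setUC. Qed.

Lemma eq_set2 a b u v : [set a; b] = [set u; v] ->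
  (a = u /\ b = v) \/ (a = v /\ b = u).
Proof.
move=> E.
have /set2P[au|av] : a \in [set u; v] by rewrite -E set21.
all: have /set2P[bu|bv] : b \in [set u; v] by rewrite -E set22.
all: subst; auto.
- by have /set2P[] : v \in [set u; u] by [rewrite E set22]; move=> ->; auto.
- by have /set2P[] : u \in [set v; v] by [rewrite E set21]; move=> ->; auto.
Qed.

Lemma set2_sub a b (P : {set V}) : ([set a; b] \subset P) = (a \in P) && (b \in P).
Proof. by rewrite subUset !sub1set. Qed.

Definition edge_rel F : rel V := fun a b => [set a; b] \in F.

Lemma edge_rel_sym F : symmetric (edge_rel F).
Proof. by move=> a b; rewrite /edge_rel set2C. Qed.

Lemma Fconnect_csym F : connect_sym (edge_rel F).
Proof. exact: sym_connect_sym (edge_rel_sym F). Qed.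

Lemma Fconnect_sym F x y : Fconnect F x y = Fconnect F y x.
Proof. exact: Fconnect_csym. Qed.

Lemma Fconnect_trans F x y z : Fconnect F x y -> Fconnect F y z -> Fconnect F x z.
Proof. exact: connect_trans. Qed.

Lemma Fconnect1 F x y : [set x; y] \in F -> Fconnect F x y.
Proof. exact: connect1. Qed.

Lemma Fconnect_sub F F' x y :
  (forall a b, [set a; b] \in F -> Fconnect F' a b) ->
  Fconnect F x y -> Fconnect F' x y.
Proof. by move=> sub; apply: connect_sub => a b /sub. Qed.

Lemma Fconnect_mono F F' x y : F \subset F' -> Fconnect F x y -> Fconnect F' x y.
Proof. by move=> /subsetP sub; apply: Fconnect_sub => a b /sub /Fconnect1. Qed.

Lemma connect_invariant (e : rel V) (P : V -> Prop) x y :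
  (forall a b, P a -> e a b -> P b) -> P x -> connect e x y -> P y.
Proof.
move=> closedP Px /connectP[p pp ->]; elim: p x Px pp => //= z p IH x Px /andP[exz pz].
exact: IH (closedP _ _ Px exz) pz.
Qed.

Lemma Fconnect_setU1 F u v x y : Fconnect ([set u; v] |: F) x y ->
  [\/ Fconnect F x y, Fconnect F x u /\ Fconnect F v y
    | Fconnect F x v /\ Fconnect F u y].
Proof.
move=> xy.
pose P z := [\/ Fconnect F x z, Fconnect F x u /\ Fconnect F v z
             | Fconnect F x v /\ Fconnect F u z].
apply: (connect_invariant (P := P)) xy; last exact: Or31 (connect0 _ x).
move=> a b Pa; rewrite /P {P} in Pa *.
rewrite /= in_setU1 => /orP[/eqP/eq_set2[[? ?]|[? ?]] | /Fconnect1 ab]; subst.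
- case: Pa => [xu | [xu vu] | [xv uu]].
  + by constructor 2; split; last exact: connect0.
  + by constructor 1; apply: Fconnect_trans xu _; rewrite Fconnect_sym.
  + by constructor 1.
- case: Pa => [xv | [xu vv] | [xv uv]].
  + by constructor 3; split; last exact: connect0.
  + by constructor 1.
  + by constructor 1; apply: Fconnect_trans xv _; rewrite Fconnect_sym.
- case: Pa => [xa | [xu va] | [xv ua]].
  + by constructor 1; apply: Fconnect_trans xa ab.
  + by constructor 2; split=> //; apply: Fconnect_trans va ab.
  + by constructor 3; split=> //; apply: Fconnect_trans ua ab.
Qed.

Definition forest F :=
  forall u v, [set u; v] \in F -> ~~ Fconnect (F :\ [set u; v]) u v.

Lemma forest_subset F F' : F' \subset F -> forest F -> forest F'.
Proof.
move=> sub forF u v uvF; apply: contra (forF u v (subsetP sub _ uvF)).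
exact/Fconnect_mono/setSD.
Qed.

Lemma forest_setU1 F u v : forest F -> ~~ Fconnect F u v -> forest ([set u; v] |: F).
Proof.
move=> forF nuv.
have uvF : [set u; v] \notin F by apply: contra nuv; apply: Fconnect1.
move=> a b; rewrite in_setU1 => /orP[/eqP E | abF].
  rewrite E setU1K //.
  by case: (eq_set2 E) => [[-> ->]|[-> ->]] //; rewrite Fconnect_sym.
have ne : [set a; b] != [set u; v] by apply: contraNneq uvF => <-.
have -> : ([set u; v] |: F) :\ [set a; b] = [set u; v] |: (F :\ [set a; b]).
  apply/setP=> e; rewrite !inE; case: (e =P [set u; v]) => [->|] //=.
  by rewrite eq_sym ne.
have sub : F :\ [set a; b] \subset F by apply: subD1set.
have ab := Fconnect1 abF.
apply/negP => /Fconnect_setU1[ab' | [au vb] | [av ub]].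
- by move: (forF a b abF); rewrite ab'.
- move/negP: nuv; apply.
  rewrite Fconnect_sym in au; rewrite Fconnect_sym in vb.
  exact: Fconnect_trans (Fconnect_mono sub au) (Fconnect_trans ab (Fconnect_mono sub vb)).
- move/negP: nuv; apply.
  rewrite Fconnect_sym in ab.
  exact: Fconnect_trans (Fconnect_mono sub ub) (Fconnect_trans ab (Fconnect_mono sub av)).
Qed.

Definition component F x := [set y | Fconnect F x y].
Definition ncomp F := #|[set component F x | x : V]|.

Lemma component_eqP F x y : reflect (component F x = component F y) (Fconnect F x y).
Proof.
apply: (iffP idP) => [xy | /setP/(_ y)]; last by rewrite !inE => ->; apply: connect0.
apply/setP=> z; rewrite !inE; apply/idP/idP; last exact: Fconnect_trans.
by apply: Fconnect_trans; rewrite Fconnect_sym.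
Qed.

Section Coarsening.
Variables F F' : {set {set V}}.
Hypothesis FF' : forall a b, [set a; b] \in F -> Fconnect F' a b.

Definition coarsen (C : {set V}) := \bigcup_(x in C) component F' x.

Lemma coarsen_component x : coarsen (component F x) = component F' x.
Proof.
apply/setP=> z; apply/bigcupP/idP => [[y] | zx]; last by exists x; rewrite // inE; apply: connect0.
by rewrite inE => /(Fconnect_sub FF') /component_eqP ->.
Qed.

Lemma components_coarsen :
  [set component F' x | x : V] = coarsen @: [set component F x | x : V].
Proof. by rewrite -imset_comp; apply: eq_imset => x /=; rewrite coarsen_component. Qed.

Lemma leq_ncomp : ncomp F' <= ncomp F.
Proof. by rewrite /ncomp components_coarsen leq_imset_card. Qed.

End Coarsening.

Lemma eq_ncomp F F' : Fconnect F =2 Fconnect F' -> ncomp F = ncomp F'.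
Proof.
by move=> E; apply/eqP; rewrite eqn_leq !leq_ncomp // => a b /Fconnect1; rewrite E.
Qed.

Lemma Fconnect_setU1l F e a b : [set a; b] \in F -> Fconnect (e |: F) a b.
Proof. by move=> abF; apply: Fconnect1; rewrite in_setU1 abF orbT. Qed.

Lemma ncomp_addedge F u v : ncomp F <= (ncomp ([set u; v] |: F)).+1.
Proof.
set F' := [set u; v] |: F.
have FF' := @Fconnect_setU1l F [set u; v].
rewrite /ncomp (components_coarsen FF').
set A := [set component F x | x : V].
have inj : {in A :\ component F u &, injective (coarsen F')}.
  move=> C1 C2 /setD1P[nu /imsetP[x _ E1]] /setD1P[nv /imsetP[y _ E2]]; subst C1 C2.
  rewrite !coarsen_component // => /component_eqP /Fconnect_setU1[xy | [xu _] | [_ uy]].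
  - exact/component_eqP.
  - by move/component_eqP: xu nu => ->; rewrite eqxx.
  - by move/component_eqP: uy nv => <-; rewrite eqxx.
have uA : component F u \in A by apply: imset_f.
rewrite (cardsD1 (component F u) A) uA add1n ltnS -(card_in_imset inj).
by apply/subset_leq_card/imsetS/subD1set.
Qed.

Lemma ncomp_addedge_bridge F u v :
  ~~ Fconnect F u v -> (ncomp ([set u; v] |: F)).+1 <= ncomp F.
Proof.
move=> nuv.
have FF' := @Fconnect_setU1l F [set u; v].
rewrite /ncomp (components_coarsen FF') ltn_neqAle leq_imset_card andbT.
apply/negP => /imset_injP inj; move/negP: nuv; apply; apply/component_eqP.
apply: inj; rewrite ?imset_f // !coarsen_component //.
by apply/component_eqP/Fconnect1/setU11.
Qed.

Lemma ncomp_setU1 F e : ncomp F <= (ncomp (e |: F)).+1.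
Proof.
have [[u v] /= /eqP -> | notpair] := pickP (fun p : V * V => e == [set p.1; p.2]).
  exact: ncomp_addedge.
apply/leqW/leq_ncomp => a b; rewrite in_setU1 => /orP[/eqP E | /Fconnect1//].
by move: (notpair (a, b)); rewrite /= E eqxx.
Qed.

Lemma ncomp_setU F J : ncomp F <= ncomp (F :|: J) + #|J|.
Proof.
elim: {J}#|J| {-2}J (erefl #|J|) F => [|n IH] J cardJ F.
  by move/eqP: cardJ; rewrite cards_eq0 => /eqP ->; rewrite setU0 cards0 addn0.
have [e eJ] : exists e, e \in J by apply/set0Pn; rewrite -card_gt0 cardJ.
have cardJe : #|J :\ e| = n by move: cardJ; rewrite (cardsD1 e) eJ => -[].
apply: leq_trans (ncomp_setU1 F e) _.
have -> : F :|: J = (e |: F) :|: (J :\ e) by rewrite -setUA setUCA setD1K.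
by rewrite cardJ addnS ltnS -cardJe IH.
Qed.

Lemma setU_Fconnect_closed F B :
  (forall u v, [set u; v] \in B -> Fconnect F u v) -> Fconnect (F :|: B) =2 Fconnect F.
Proof.
move=> connB x y; apply/idP/idP; last exact/Fconnect_mono/subsetUl.
by apply: Fconnect_sub => a b /setUP[/Fconnect1 | /connB].
Qed.

Lemma forest_extension F B : forest F -> exists T : {set {set V}},
  [/\ F \subset T, T \subset F :|: B, forest T,
      Fconnect T =2 Fconnect (F :|: B) & #|T :\: F| + ncomp (F :|: B) <= ncomp F].
Proof.
move: {2}#|B :\: F| (erefl #|B :\: F|) => n; elim/ltn_ind: n F => n IH F cardBF forF.
have [[u v] /= /andP[uvB nuv] | connB] :=
  pickP (fun p : V * V => ([set p.1; p.2] \in B) && ~~ Fconnect F p.1 p.2); last first.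
  have {}connB u v : [set u; v] \in B -> Fconnect F u v.
    by move=> uvB; move: (connB (u, v)); rewrite /= uvB => /negbFE.
  have connE := setU_Fconnect_closed connB.
  exists F; split=> //; first exact: subsetUl.
  by rewrite setDv cards0 (eq_ncomp connE).
set F' := [set u; v] |: F.
have uvBF : [set u; v] \in B :\: F.
  by rewrite inE uvB andbT; apply: contra nuv; apply: Fconnect1.
have BF' : B :\: F' = (B :\: F) :\ [set u; v].
  by apply/setP=> e; rewrite !inE; case: (e == [set u; v]).
have ltBF' : #|B :\: F'| < n by rewrite -cardBF (cardsD1 [set u; v] (B :\: F)) uvBF BF'.
have [T [F'T TF'B forT connT cardT]] := IH _ ltBF' F' (erefl _) (forest_setU1 forF nuv).
have F'B : F' :|: B = F :|: B.
  by apply/setP=> e; rewrite !inE; case: (e =P [set u; v]) => //= ->; rewrite uvB orbT.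
rewrite F'B in TF'B connT cardT.
exists T; split=> //; first exact: subset_trans (subsetUr _ _) F'T.
have TF : #|T :\: F| <= #|T :\: F'|.+1.
  have sub : T :\: F \subset [set u; v] |: (T :\: F').
    by apply/subsetP=> e; rewrite !inE; case: (e == [set u; v]).
  by apply: leq_trans (subset_leq_card sub) _; rewrite cardsU1 -add1n leq_add2r leq_b1.
apply: leq_trans (leq_add TF (leqnn _)) (leq_trans _ (ncomp_addedge_bridge nuv)).
by rewrite addSn ltnS.
Qed.

End Forests.

Section SpanningTrees.
Variables (V : finType) (G : rel V).
Implicit Types (F : {set {set V}}) (P : {set V}) (a b x y : V).

Lemma spanning_treeP P F : reflect
  [/\ forall e, e \in F -> induced_edge G P e,
      forall x y, x \in P -> y \in P -> Fconnect F x y & forest F]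
  (spanning_tree G P F).
Proof.
apply: (iffP and3P) => [[/forall_inP inF /forall_inP connF /forallP forF] | [inF connF forF]].
  split=> // [x y xP yP | u v]; first by move/forall_inP: (connF x xP); apply.
  by move/forallP: (forF u) => /(_ v) /implyP.
split; first exact/forall_inP.
  by apply/forall_inP => x xP; apply/forall_inP => y yP; apply: connF.
by apply/forallP => u; apply/forallP => v; apply/implyP/forF.
Qed.

Lemma induced_edgeP P e : induced_edge G P e ->
  exists a b, [/\ e = [set a; b], G a b, a \in P & b \in P].
Proof. by case/existsP=> a /existsP[b /and4P[/eqP -> Gab aP bP]]; exists a, b. Qed.

Lemma induced_edge_set2 P a b : symmetric G ->
  induced_edge G P [set a; b] -> [/\ a \in P, b \in P & G a b].
Proof.
move=> Gsym /induced_edgeP[u [v [/eq_set2 [[-> ->] | [-> ->]] Guv uP vP]]] //.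
by rewrite Gsym.
Qed.

Lemma Fconnect_restrict F P x y :
  (forall a b, [set a; b] \in F -> a \in P -> b \in P) -> x \in P ->
  Fconnect F x y -> Fconnect [set e in F | e \subset P] x y.
Proof.
move=> closedP xP xy.
suff [] : y \in P /\ Fconnect [set e in F | e \subset P] x y by [].
apply: (connect_invariant (P := fun z => z \in P /\ Fconnect [set e in F | e \subset P] x z)) xy;
  last by split=> //; apply: connect0.
move=> a b [aP xa] abF; have bP := closedP a b abF aP; split=> //.
by apply: Fconnect_trans xa (Fconnect1 _); rewrite inE abF set2_sub aP bP.
Qed.

End SpanningTrees.

Section Labellings.
Variables (V : finType) (k : nat).

Definition labellings (U : {set {set V}}) :=
  [set f : {ffun V -> 'I_k} | is_kpartition f &&
     [forall x, forall y, Fconnect U x y ==> (f x == f y)]].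

Lemma card_labellings U : ncomp U <= k -> #|labellings U| <= k`!.
Proof.
move=> ncompU.
set e := edge_rel U.
have esym : connect_sym e by exact: Fconnect_csym.
set R := [set x | fingraph.roots e x].
have cardR : #|R| <= k.
  apply: leq_trans ncompU; rewrite /ncomp -(card_in_imset (f := component U) (D := R)).
    by apply/subset_leq_card/subsetP => _ /imsetP[x _ ->]; apply: imset_f.
  move=> x y; rewrite !inE => /eqP rx /eqP ry /component_eqP xy.
  by rewrite -rx -ry; apply/(fingraph.rootP esym).
have Rroot x : fingraph.root e x \in R by rewrite inE roots_root.
have lab_root f : f \in labellings U -> forall x, f x = f (fingraph.root e x).
  rewrite inE => /andP[_ /forallP constf] x.
  by move/forallP: (constf x) => /(_ (fingraph.root e x)) /implyP /(_ (connect_root e x)) /eqP.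
pose restr (f : {ffun V -> 'I_k}) := [ffun j : 'I_#|R| => f (enum_val j)].
have inj : {in labellings U &, injective restr}.
  move=> f1 f2 f1U f2U E; apply/ffunP => x.
  rewrite (lab_root _ f1U) (lab_root _ f2U) -(enum_rankK_in (Rroot x) (Rroot x)).
  by move/ffunP: E => /(_ (enum_rank_in (Rroot x) (fingraph.root e x))); rewrite !ffunE.
rewrite -(card_in_imset inj).
apply: leq_trans (_ : #|[set h : {ffun 'I_#|R| -> 'I_k} | injectiveb h]| <= _).
  apply/subset_leq_card/subsetP => _ /imsetP[f fU ->]; rewrite inE.
  have onto i : i \in codom (restr f).
    move: (fU); rewrite inE => /andP[/forallP /(_ i) /set0Pn[x]].
    rewrite inE => /eqP <- _; apply/codomP; exists (enum_rank_in (Rroot x) (fingraph.root e x)).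
    by rewrite ffunE (enum_rankK_in (Rroot x) (Rroot x)) (lab_root _ fU).
  have /image_injP injf : #|codom (restr f)| == #|'I_#|R| |.
    rewrite eqn_leq leq_image_card /= card_ord; apply: leq_trans cardR _.
    by rewrite -{1}(card_ord k); apply/subset_leq_card/subsetP => i _; apply: onto.
  by apply/injectiveP => a b; apply: injf.
rewrite card_inj_ffuns !card_ord -(ffact_fact cardR) leq_pmulr //.
exact: fact_gt0.
Qed.

End Labellings.

Lemma card_pairs_sum (A B : finType) (S : {set A * B}) :
  #|S| = \sum_(a : A) #|[set b | (a, b) \in S]|.
Proof.
rewrite -sum1_card (eq_bigr (fun a => \sum_(b | (a, b) \in S) 1)); last first.
  by move=> a _; rewrite -sum1_card; apply: eq_bigl => b; rewrite inE.
rewrite pair_big_dep; apply: eq_bigl => -[a b] /=; by [].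
Qed.

Lemma prod_nat_bool (I : finType) (b : I -> bool) :
  \prod_(i : I) (b i : nat) = [forall i, b i].
Proof.
have [/forallP allb | /forallPn[i nbi]] := boolP [forall i, b i].
  by rewrite big1 // => i _; rewrite allb.
by rewrite (bigD1 i) //= (negbTE nbi).
Qed.

Lemma tree_weight_card (V : finType) (G : rel V) k (f : {ffun V -> 'I_k}) :
  tree_weight G f =
  #|[set g : {ffun 'I_k -> {set {set V}}} | [forall i, spanning_tree G (part f i) (g i)]]|.
Proof.
rewrite /tree_weight /num_spanning_trees.
rewrite (eq_bigr (fun i => \sum_(F : {set {set V}}) (spanning_tree G (part f i) F : nat)));
  last by move=> i _; rewrite -sum1_card [LHS]big_mkcond; apply: eq_bigr => F _; rewrite inE.
rewrite bigA_distr_bigA -sum1_card [RHS]big_mkcond; apply: eq_bigr => g _.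
by rewrite prod_nat_bool inE.
Qed.

Section Comparison.
Variables (V : finType) (G : rel V).
Hypothesis Gsym : symmetric G.
Variables (k : nat) (f0 : {ffun V -> 'I_k}).
Hypothesis f0_kpart : is_kpartition f0.

Local Notation labelling := {ffun V -> 'I_k}.
Local Notation family := {ffun 'I_k -> {set {set V}}}.

Definition inner_edges := [set e : {set V} | [exists x, exists y,
   [&& e == [set x; y], G x y & f0 x == f0 y]]].

Variables near junctions : {set {set V}}.
Hypothesis f0_part_connected : forall x y, f0 x = f0 y -> Fconnect inner_edges x y.
Hypothesis cross_edge_near : forall x y, G x y -> f0 x != f0 y ->
  [set x; y] \in near /\ Fconnect ((near :&: inner_edges) :|: junctions) x y.

Lemma inner_edgeP e : e \in inner_edges ->
  exists a b, [/\ e = [set a; b], G a b & f0 a = f0 b].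
Proof. by rewrite inE => /existsP[a /existsP[b /and3P[/eqP -> ? /eqP ?]]]; exists a, b. Qed.

Lemma inner_edge_set2 a b : [set a; b] \in inner_edges -> G a b /\ f0 a = f0 b.
Proof.
case/inner_edgeP=> u [v [/eq_set2[[-> ->] | [-> ->]] Guv fuv]] //.
by rewrite Gsym fuv.
Qed.

Lemma inner_edge_in a b : G a b -> f0 a = f0 b -> [set a; b] \in inner_edges.
Proof.
by move=> Gab fab; rewrite inE; apply/existsP; exists a; apply/existsP; exists b;
  rewrite eqxx Gab fab eqxx.
Qed.

Lemma inner_edges_Fconnect x y : Fconnect inner_edges x y -> f0 x = f0 y.
Proof.
by apply: (connect_invariant (P := fun z => f0 x = f0 z)) => // a b -> /inner_edge_set2[].
Qed.

Lemma ncomp_inner_edges : k <= ncomp inner_edges.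
Proof.
have inhabited i : exists x, f0 x = i.
  by move/forallP: f0_kpart => /(_ i) /set0Pn[x]; rewrite inE => /eqP; exists x.
have part_component x : part f0 (f0 x) = component inner_edges x.
  apply/setP=> y; rewrite !inE eq_sym.
  by apply/eqP/idP => [/f0_part_connected | /inner_edges_Fconnect].
have part_inj : injective (part f0).
  move=> i j E; have [x fx] := inhabited i.
  by move/setP: E => /(_ x); rewrite !inE fx eqxx => /esym/eqP.
rewrite -[k]card_ord -cardsT -(card_imset _ part_inj).
apply/subset_leq_card/subsetP => _ /imsetP[i _ ->]; have [x <-] := inhabited i.
by rewrite part_component imset_f.
Qed.

Definition tree_union (g : family) := \bigcup_(i < k) g i.

Section TreeUnion.
Variables (f : labelling) (g : family).
Hypothesis g_trees : forall i, spanning_tree G (part f i) (g i).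

Lemma tree_edge_induced i e : e \in g i -> induced_edge G (part f i) e.
Proof. by case/spanning_treeP: (g_trees i) => inF _ _; apply: inF. Qed.

Lemma tree_unionP e : e \in tree_union g ->
  exists i a b, [/\ e \in g i, e = [set a; b], G a b, f a = i & f b = i].
Proof.
case/bigcupP=> i _ ei; have /induced_edgeP[a [b [eab Gab]]] := tree_edge_induced ei.
by rewrite !inE => /eqP fa /eqP fb; exists i, a, b.
Qed.

Lemma tree_union_set2 a b : [set a; b] \in tree_union g -> G a b /\ f a = f b.
Proof.
case/bigcupP=> i _ /tree_edge_induced /(induced_edge_set2 Gsym)[].
by rewrite !inE => /eqP -> /eqP ->.
Qed.

Lemma tree_union_part i e : e \in tree_union g -> e \subset part f i -> e \in g i.
Proof.
case/tree_unionP=> j [a [b [ej eab _ fa _]]]; subst e.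
by rewrite set2_sub inE fa => /andP[/eqP <-].
Qed.

Lemma tree_union_Fconnect x y : Fconnect (tree_union g) x y = (f x == f y).
Proof.
apply/idP/eqP => [|fxy].
  by apply: (connect_invariant (P := fun z => f x = f z)) => // a b -> /tree_union_set2[].
case/spanning_treeP: (g_trees (f x)) => _ connT _.
apply: (Fconnect_mono (bigcup_sup (f x) isT)).
by apply: connT; rewrite inE ?fxy.
Qed.

Lemma forest_tree_union : forest (tree_union g).
Proof.
move=> u v /bigcupP[i _ uvi].
have [ui vi _] := induced_edge_set2 Gsym (tree_edge_induced uvi).
case/spanning_treeP: (g_trees i) => _ _ /(_ u v uvi); apply: contra => uv.
have closed_i a b : [set a; b] \in tree_union g :\ [set u; v] ->
    a \in part f i -> b \in part f i.
  by rewrite in_setD1 !inE => /andP[_ /tree_union_set2[_ ->]].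
apply: Fconnect_mono (Fconnect_restrict closed_i ui uv).
apply/subsetP => e; rewrite !inE => /andP[/andP[ne eU] sub].
by rewrite ne tree_union_part.
Qed.

Lemma ncomp_tree_union : ncomp (tree_union g) <= k.
Proof.
rewrite -[k]card_ord -cardsT; apply: leq_trans (leq_imset_card (part f) _).
apply/subset_leq_card/subsetP => _ /imsetP[x _ ->]; apply/imsetP; exists (f x) => //.
by apply/setP=> y; rewrite !inE tree_union_Fconnect eq_sym.
Qed.

Lemma trees_of_union : g = [ffun i => [set e in tree_union g | e \subset part f i]].
Proof.
apply/ffunP => i; rewrite ffunE; apply/setP => e; rewrite inE.
apply/idP/andP => [ei | [eU sub]]; last exact: tree_union_part.
split; first by apply/bigcupP; exists i.
by have /induced_edgeP[a [b [-> _ ai bi]]] := tree_edge_induced ei; rewrite set2_sub ai bi.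
Qed.

End TreeUnion.

Section Restriction.
Variable T : {set {set V}}.
Hypotheses (T_inner : T \subset inner_edges) (forT : forest T).
Hypothesis connT : Fconnect T =2 Fconnect inner_edges.

Definition restrict_trees : family := [ffun i => [set e in T | e \subset part f0 i]].

Lemma restrict_trees_spanning i : spanning_tree G (part f0 i) (restrict_trees i).
Proof.
apply/spanning_treeP; split.
- move=> e; rewrite ffunE inE => /andP[/(subsetP T_inner) /inner_edgeP[a [b [-> Gab _]]]].
  rewrite set2_sub => /andP[ai bi].
  by apply/existsP; exists a; apply/existsP; exists b; rewrite eqxx Gab ai bi.
- move=> x y xi yi; rewrite ffunE.
  have closed_i a b : [set a; b] \in T -> a \in part f0 i -> b \in part f0 i.
    by move=> /(subsetP T_inner) /inner_edge_set2[_ fab]; rewrite !inE fab.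
  apply: (Fconnect_restrict closed_i xi); rewrite connT; apply: f0_part_connected.
  by move: xi yi; rewrite !inE => /eqP -> /eqP ->.
- by apply: forest_subset forT; rewrite ffunE; apply/subsetP => e; rewrite inE => /andP[].
Qed.

Lemma tree_union_restrict_trees : tree_union restrict_trees = T.
Proof.
apply/setP => e; apply/bigcupP/idP => [[i _] | eT]; first by rewrite ffunE inE => /andP[].
have /inner_edgeP[a [b [eab _ fab]]] := subsetP T_inner _ eT.
by exists (f0 a) => //; rewrite ffunE inE eT eab set2_sub !inE fab eqxx.
Qed.

End Restriction.

Lemma close_forest_exists (f : labelling) (g : family) :
  (forall i, spanning_tree G (part f i) (g i)) ->
  exists T : {set {set V}}, [/\ T \subset inner_edges, forest T,
     Fconnect T =2 Fconnect inner_edges, tree_union g :\: near \subset T &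
     #|(T :\: near) :\: tree_union g| <= #|junctions|].
Proof.
move=> g_trees; set U := tree_union g.
have forUin : forest (U :&: inner_edges).
  exact: forest_subset (subsetIl _ _) (forest_tree_union g_trees).
have [T1 [UT1 T1near forT1 connT1 _]] := forest_extension (near :&: inner_edges) forUin.
have T1_inner : T1 \subset inner_edges.
  by apply: subset_trans T1near _; apply/subUsetP; split; apply: subsetIr.
have ncompT1 : ncomp T1 <= k + #|junctions|.
  rewrite (eq_ncomp connT1); apply: leq_trans (ncomp_setU _ junctions) _.
  rewrite leq_add2r; apply: leq_trans (ncomp_tree_union g_trees).
  apply: leq_ncomp => a b abU; have [Gab _] := tree_union_set2 g_trees abU.
  have [fab | /eqP nfab] := f0 a =P f0 b.
    by apply/Fconnect1/setUP; left; apply/setUP; left; rewrite inE abU inner_edge_in.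
  have [_ ab] := cross_edge_near Gab nfab.
  by apply: Fconnect_mono ab; apply/setSU/subsetUr.
have [T [T1T TT1 forT connT cardT]] := forest_extension inner_edges forT1.
rewrite (setUidPr T1_inner) in TT1 connT cardT.
exists T; split=> //.
  apply/subsetP => e /setDP[eU enear].
  have [i [a [b [_ eab Gab fa fb]]]] := tree_unionP g_trees eU.
  have [fab | /eqP nfab] := f0 a =P f0 b.
    by apply/(subsetP T1T)/(subsetP UT1); rewrite inE eU eab inner_edge_in.
  by have [abnear _] := cross_edge_near Gab nfab; rewrite eab abnear in enear.
have : #|(T :\: near) :\: U| <= #|T :\: T1|.
  apply/subset_leq_card/subsetP => e; rewrite !inE => /andP[eU /andP[enear eT]].
  rewrite eT andbT; apply: contraNN eU => /(subsetP T1near).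
  by rewrite !inE (negbTE enear) orbF => /andP[].
have := ncomp_inner_edges; lia.
Qed.

Definition tree_partitions := [set p : labelling * family |
  is_kpartition p.1 && [forall i, spanning_tree G (part p.1 i) (p.2 i)]].

Definition f0_tree_families :=
  [set g : family | [forall i, spanning_tree G (part f0 i) (g i)]].

Definition close_to (p : labelling * family) (g : family) :=
  (tree_union p.2 :\: near \subset tree_union g) &&
  (#|(tree_union g :\: near) :\: tree_union p.2| <= #|junctions|).

Definition small_inner_sets :=
  [set Z : {set {set V}} | (Z \subset inner_edges) && (#|Z| <= #|junctions|)].

Lemma Z_tree_card : Z_tree G k = #|tree_partitions|.
Proof.
rewrite /Z_tree card_pairs_sum [LHS]big_mkcond; apply: eq_bigr => f _.
rewrite tree_weight_card; have [f_kpart | /negbTE f_nkpart] := boolP (is_kpartition f).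
  by apply: eq_card => g; rewrite !inE f_kpart.
by apply/esym/eqP; rewrite cards_eq0; apply/eqP/setP => g; rewrite !inE f_nkpart.
Qed.

Lemma close_to_exists p : p \in tree_partitions ->
  exists2 g, g \in f0_tree_families & close_to p g.
Proof.
rewrite inE => /andP[_ /forallP g_trees].
have [T [T_inner forT connT sub card]] := close_forest_exists g_trees.
exists (restrict_trees T); first by rewrite inE; apply/forallP; apply: restrict_trees_spanning.
by rewrite /close_to tree_union_restrict_trees // sub card.
Qed.

Lemma f0_tree_union_inner g : g \in f0_tree_families -> tree_union g \subset inner_edges.
Proof.
rewrite inE => /forallP g_trees; apply/subsetP => e /(tree_unionP g_trees).
by case=> i [a [b [_ -> Gab fa fb]]]; rewrite inner_edge_in // fa fb.
Qed.

Section Fiber.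
Variable g : family.
Hypothesis g_f0 : g \in f0_tree_families.

Definition fiber := [set p in tree_partitions | close_to p g].

Definition encode (p : labelling * family) :=
  ((tree_union p.2 :&: near, (tree_union g :\: near) :\: tree_union p.2), p.1).

Lemma decode_tree_union p : p \in fiber ->
  tree_union p.2 = (encode p).1.1 :|: ((tree_union g :\: near) :\: (encode p).1.2).
Proof.
rewrite !inE => /andP[_ /andP[/subsetP sub _]]; apply/setP => e; rewrite !inE.
move: (sub e); rewrite !inE.
by case: (e \in tree_union p.2); case: (e \in near); case: (e \in tree_union g) => //= ->.
Qed.

Lemma encode_inj : {in fiber &, injective encode}.
Proof.
move=> [f1 g1] [f2 g2] p1 p2 E.
have U12 : tree_union g1 = tree_union g2.
  by rewrite (decode_tree_union p1) (decode_tree_union p2) E.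
have /= f12 := congr1 snd E; subst f2.
move: p1 p2; rewrite !inE /= => /andP[/andP[_ /forallP g1_trees] _].
move=> /andP[/andP[_ /forallP g2_trees] _].
by rewrite /= (trees_of_union g1_trees) (trees_of_union g2_trees) U12.
Qed.

Lemma encode_fiber_range p : p \in fiber ->
  (encode p).1 \in setX (powerset near) small_inner_sets.
Proof.
case/setIdP=> _ /andP[_ card_p]; rewrite in_setX powersetE subsetIr /= inE card_p andbT.
apply: subset_trans (subsetDl _ _) _; apply: subset_trans (subsetDl _ _) _.
exact: f0_tree_union_inner.
Qed.

Lemma card_encode_slice q :
  #|[set f | (q, f) \in encode @: fiber]| <=
  (q \in setX (powerset near) small_inner_sets) * k`!.
Proof.
have [-> | [f]] := set_0Vmem [set f | (q, f) \in encode @: fiber]; first by rewrite cards0.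
rewrite inE => /imsetP[p pfib E].
have qE : q = (encode p).1 by rewrite -E.
rewrite qE encode_fiber_range // mul1n -qE.
have /setIdP[/setIdP[_ /forallP g_trees] _] := pfib.
apply: leq_trans (card_labellings (ncomp_tree_union g_trees)).
apply/subset_leq_card/subsetP => f'; rewrite inE => /imsetP[p' p'fib E'].
have qE' : q = (encode p').1 by rewrite -E'.
have -> : f' = p'.1 by rewrite -[f']/((q, f').2) E'.
have /setIdP[/setIdP[f'_kpart /forallP g'_trees] _] := p'fib.
have U' : tree_union p'.2 = tree_union p.2.
  by rewrite (decode_tree_union p'fib) (decode_tree_union pfib) -qE' -qE.
rewrite inE f'_kpart; apply/forallP => x; apply/forallP => y; apply/implyP.
by rewrite -U' (tree_union_Fconnect g'_trees).
Qed.

Lemma card_fiber : #|fiber| <= 2 ^ #|near| * #|small_inner_sets| * k`!.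
Proof.
rewrite -(card_in_imset encode_inj) card_pairs_sum.
apply: leq_trans (_ : \sum_q (q \in setX (powerset near) small_inner_sets) * k`! <= _).
  by apply: leq_sum => q _; apply: card_encode_slice.
rewrite -big_distrl /= -card_powerset -cardsX leq_mul2r; apply/orP; right.
by rewrite -sum1_card [X in _ <= X]big_mkcond.
Qed.

End Fiber.

Lemma card_tree_partitions :
  #|tree_partitions| <= 2 ^ #|near| * #|small_inner_sets| * k`! * #|f0_tree_families|.
Proof.
rewrite mulnC -sum_nat_const.
apply: leq_trans (_ : \sum_(g in f0_tree_families) #|fiber g| <= _); last first.
  by apply: leq_sum => g g_f0; apply: card_fiber.
rewrite -sum1_card.
apply: leq_trans (_ : \sum_(p in tree_partitions)
    \sum_(g in f0_tree_families) (close_to p g : nat) <= _).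
  apply: leq_sum => p ptp; have [g g_f0 pg] := close_to_exists ptp.
  by rewrite (bigD1 g) //= pg.
rewrite exchange_big; apply: leq_sum => g _.
rewrite -sum1_card big_mkcond [X in _ <= X]big_mkcond; apply: leq_sum => p _.
by rewrite !inE; case: (_ && _); case: (close_to p g).
Qed.

Hypothesis f0_bal : is_balanced f0.

Lemma card_f0_tree_families : #|f0_tree_families| <= Z_balanced G k.
Proof.
rewrite /Z_balanced (bigD1 f0) /=; last by rewrite f0_kpart f0_bal.
by rewrite tree_weight_card leq_addr.
Qed.

Lemma f0_tree_families_gt0 : 0 < #|f0_tree_families|.
Proof.
have forest0 : forest (set0 : {set {set V}}) by move=> u v; rewrite in_set0.
have [T [_ T_inner forT connT _]] := forest_extension inner_edges forest0.
rewrite set0U in T_inner connT.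
apply/card_gt0P; exists (restrict_trees T); rewrite inE.
by apply/forallP; apply: restrict_trees_spanning.
Qed.

Theorem Z_tree_le_balanced :
  Z_tree G k <= 2 ^ #|near| * #|small_inner_sets| * k`! * Z_balanced G k /\
  0 < Z_balanced G k.
Proof.
split; last exact: leq_trans f0_tree_families_gt0 card_f0_tree_families.
rewrite Z_tree_card; apply: leq_trans card_tree_partitions _.
by rewrite leq_mul2l card_f0_tree_families orbT.
Qed.

End Comparison.

Lemma card_small_subsets (T : finType) (B : {set T}) J E J' :
  #|B| <= E -> J <= J' ->
  #|[set Z : {set T} | (Z \subset B) && (#|Z| <= J)]| <= \sum_(j < J'.+1) 'C(E, j).
Proof.
move=> BE JJ'.
apply: leq_trans (_ : \sum_(j < J'.+1) #|[set Z : {set T} | Z \subset B & #|Z| == j]| <= _);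
  last by apply: leq_sum => j _; rewrite cards_draws leq_bin2l.
rewrite (eq_bigr (fun j : 'I_J'.+1 => \sum_(Z : {set T}) ((Z \subset B) && (#|Z| == j) : nat)));
  last by move=> j _; rewrite -sum1_card [LHS]big_mkcond; apply: eq_bigr => Z _; rewrite inE.
rewrite -sum1_card exchange_big [X in X <= _]big_mkcond; apply: leq_sum => Z _; rewrite inE.
have [/andP[ZB ZJ] | //] := boolP (_ && _).
have ZJ' : #|Z| < J'.+1 by rewrite ltnS (leq_trans ZJ JJ').
by rewrite (bigD1 (Ordinal ZJ')) //= ZB eqxx.
Qed.

Section Snake.
Variables (V : finType) (G : rel V).
Hypothesis Gsym : symmetric G.
Variables k s b : nat.
Hypotheses (k_gt0 : 0 < k) (s_gt0 : 0 < s) (b_le_s : b <= s).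
Variables (tau : V -> nat) (sigma : nat -> V).
Hypotheses (tau_lt : forall x, tau x < k * s) (tauK : cancel tau sigma).
Hypothesis sigmaK : forall j, j < k * s -> tau (sigma j) = j.
Hypothesis G_snake : forall j, j.+1 < k * s -> G (sigma j) (sigma j.+1).
Variable wrap : bool.
Hypothesis G_short : forall x y, G x y ->
  (tau x < tau y + b /\ tau y < tau x + b) \/
  (wrap /\ ((tau x < b /\ k * s - b <= tau y) \/ (tau y < b /\ k * s - b <= tau x))).
Variables (d : nat) (nb : V -> 'I_d -> V).
Hypothesis G_nb : forall x y, G x y -> exists i, y = nb x i.

Lemma divn_block t q : q * s <= t -> t < q * s + s -> t %/ s = q.
Proof.
move=> qt tq; apply/eqP; rewrite eqn_leq leq_divRL // qt andbT.
by rewrite -ltnS ltn_divLR // mulSn addnC.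
Qed.

Lemma divn_between a t c : a <= t -> t <= c -> a %/ s = c %/ s -> t %/ s = a %/ s.
Proof.
move=> le_at le_tc eq_ac; apply/eqP; rewrite eqn_leq (leq_div2r s le_at) andbT eq_ac.
exact: leq_div2r.
Qed.

Lemma block_lt x : tau x %/ s < k.
Proof. by rewrite ltn_divLR // mulnC. Qed.

Definition blocks : {ffun V -> 'I_k} := [ffun x => Ordinal (block_lt x)].

Lemma blocksE x : blocks x = tau x %/ s :> nat.
Proof. by rewrite ffunE. Qed.

Lemma eq_blocks x y : (blocks x == blocks y) = (tau x %/ s == tau y %/ s).
Proof. by rewrite -val_eqE /= !blocksE. Qed.

Local Notation inner := (inner_edges G blocks).

Lemma snake_path (F : {set {set V}}) a c : a <= c ->
  (forall t, a <= t -> t < c -> [set sigma t; sigma t.+1] \in F) ->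
  Fconnect F (sigma a) (sigma c).
Proof.
elim: c => [|c IH]; first by rewrite leqn0 => /eqP -> _; apply: connect0.
rewrite leq_eqVlt => /orP[/eqP -> _ | ac F_path]; first exact: connect0.
apply: Fconnect_trans (IH ac _) (Fconnect1 (F_path c ac _)) => // t le_at lt_tc.
by apply: F_path => //; apply: ltnW.
Qed.

Lemma inner_snake_edge t : t.+1 < k * s -> t %/ s = t.+1 %/ s ->
  [set sigma t; sigma t.+1] \in inner.
Proof.
move=> tN tt1; apply: inner_edge_in; first exact: G_snake.
by apply/eqP; rewrite eq_blocks !sigmaK // ?tt1 // ltnW.
Qed.

Lemma block_path (F : {set {set V}}) a c : a <= c -> c < k * s -> a %/ s = c %/ s ->
  (forall t, a <= t -> t < c -> [set sigma t; sigma t.+1] \in inner ->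
     [set sigma t; sigma t.+1] \in F) ->
  Fconnect F (sigma a) (sigma c).
Proof.
move=> ac cN acs F_inner; apply: snake_path => // t le_at lt_tc.
apply: F_inner (inner_snake_edge _ _) => //; first exact: leq_ltn_trans lt_tc cN.
by rewrite (divn_between le_at (ltnW lt_tc) acs) (divn_between _ lt_tc acs) // ltnW.
Qed.

Lemma blocks_connected x y : blocks x = blocks y -> Fconnect inner x y.
Proof.
wlog le_xy : x y / tau x <= tau y.
  move=> wlog_le xy; have [le_xy | /ltnW le_yx] := leqP (tau x) (tau y).
    exact: wlog_le.
  by rewrite Fconnect_sym; apply: wlog_le (esym xy).
move/eqP; rewrite eq_blocks => /eqP xy.
by rewrite -(tauK x) -(tauK y); apply: block_path.
Qed.

Definition near_boundary t := [exists i : 'I_k.+1, (i * s <= t + b) && (t < i * s + b)].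

Definition near_vertices := [set x | near_boundary (tau x)].

Definition near_edges :=
  (fun p : V * 'I_d => [set p.1; nb p.1 p.2]) @: setX near_vertices setT.

Definition block_junctions :=
  [set [set sigma (i.+1 * s).-1; sigma (i.+1 * s)] | i : 'I_k.-1].

Definition junction_edges :=
  if wrap then [set sigma 0; sigma (k * s).-1] |: block_junctions else block_junctions.

Local Notation bridges := ((near_edges :&: inner) :|: junction_edges).

Lemma near_boundaryI t i : i <= k -> i * s <= t + b -> t < i * s + b -> near_boundary t.
Proof. by move=> ik lo hi; apply/existsP; exists (Ordinal (ik : i < k.+1)); rewrite lo hi. Qed.

Lemma near_edge x y : near_boundary (tau x) -> G x y -> [set x; y] \in near_edges.
Proof. by move=> x_near /G_nb[i ->]; apply/imsetP; exists (x, i); rewrite // !inE x_near. Qed.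

Lemma near_block_path a c : a <= c -> c < k * s -> a %/ s = c %/ s ->
  (forall t, a <= t -> t <= c -> near_boundary t) ->
  Fconnect (near_edges :&: inner) (sigma a) (sigma c).
Proof.
move=> ac cN acs near_ac; apply: block_path => // t le_at lt_tc t_inner.
rewrite inE t_inner andbT near_edge ?G_snake ?sigmaK ?near_ac //; try lia.
Qed.

Lemma bridges_near (X : {set {set V}}) x y :
  Fconnect (near_edges :&: inner) x y -> Fconnect (near_edges :&: inner :|: X) x y.
Proof. exact/Fconnect_mono/subsetUl. Qed.

Lemma bridges_junction a c : [set a; c] \in junction_edges -> Fconnect bridges a c.
Proof. by move=> ac; apply/Fconnect1/setUP; right. Qed.

Lemma cross_short_edge x y : G x y -> tau x < tau y -> tau y < tau x + b ->
  tau x %/ s != tau y %/ s -> [set x; y] \in near_edges /\ Fconnect bridges x y.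
Proof.
move=> Gxy lt_xy lt_yx ne_xy.
have [i yi] : exists i, tau y %/ s = i by eexists.
have ik : i < k by rewrite -yi block_lt.
have y_lt := tau_lt y.
have is_y : i * s <= tau y by rewrite -yi leq_trunc_div.
have y_is : tau y < i * s + s by rewrite -yi {1}(divn_eq (tau y) s) ltn_add2l ltn_pmod.
have x_is : tau x < i * s.
  rewrite -ltn_divLR // ltn_neqAle -{2}yi leq_div2r ?(ltnW lt_xy) // andbT.
  by rewrite -yi.
have i_gt0 : 0 < i by rewrite lt0n; apply: contraTneq x_is => ->.
have ii : i.-1 * s + s = i * s by rewrite addnC -mulSn prednK.
split; first by apply: near_edge => //; apply: (near_boundaryI (ltnW ik)); lia.
have xi : tau x %/ s = (i * s).-1 %/ s by rewrite !(@divn_block _ i.-1) //; lia.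
have P1 : Fconnect (near_edges :&: inner) x (sigma (i * s).-1).
  rewrite -(tauK x); apply: (near_block_path _ _ xi); try lia.
  by move=> t lo hi; apply: (near_boundaryI (ltnW ik)); lia.
have P2 : Fconnect (near_edges :&: inner) (sigma (i * s)) y.
  rewrite -(tauK y); apply: near_block_path; rewrite ?mulnK ?yi //; try lia.
  by move=> t lo hi; apply: (near_boundaryI (ltnW ik)); lia.
have J : [set sigma (i * s).-1; sigma (i * s)] \in junction_edges.
  have iJ : [set sigma (i * s).-1; sigma (i * s)] \in block_junctions.
    have ik1 : i.-1 < k.-1 by lia.
    by apply/imsetP; exists (Ordinal ik1); rewrite //= prednK.
  by rewrite /junction_edges; case: wrap; rewrite ?setU1r.
apply: Fconnect_trans (bridges_near _ P1) _.
exact: Fconnect_trans (bridges_junction J) (bridges_near _ P2).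
Qed.

Lemma cross_wrap_edge x y : G x y -> wrap -> tau x < b -> k * s - b <= tau y ->
  [set x; y] \in near_edges /\ Fconnect bridges x y.
Proof.
move=> Gxy wr x_lo y_hi.
have y_lt := tau_lt y.
have kk : k.-1 * s + s = k * s by rewrite addnC -mulSn prednK.
split; first by apply: near_edge => //; apply: (@near_boundaryI _ 0); lia.
have P1 : Fconnect (near_edges :&: inner) (sigma 0) x.
  rewrite -(tauK x); apply: near_block_path; rewrite ?div0n ?divn_small //; try lia.
  by move=> t lo hi; apply: (@near_boundaryI _ 0); lia.
have yk : tau y %/ s = (k * s).-1 %/ s by rewrite !(@divn_block _ k.-1) //; lia.
have P2 : Fconnect (near_edges :&: inner) y (sigma (k * s).-1).
  rewrite -(tauK y); apply: (near_block_path _ _ yk); try lia.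
  by move=> t lo hi; apply: (@near_boundaryI _ k); lia.
have J : [set sigma 0; sigma (k * s).-1] \in junction_edges by rewrite /junction_edges wr setU11.
rewrite Fconnect_sym in P1.
apply: Fconnect_trans (bridges_near _ P1) _.
apply: Fconnect_trans (bridges_junction J) _.
by rewrite Fconnect_sym; apply: bridges_near.
Qed.

Lemma blocks_cross_edge x y : G x y -> blocks x != blocks y ->
  [set x; y] \in near_edges /\ Fconnect bridges x y.
Proof.
wlog le_xy : x y / tau x <= tau y.
  move=> wlog_le Gxy ne; have [le_xy | /ltnW le_yx] := leqP (tau x) (tau y).
    exact: wlog_le.
  rewrite set2C Fconnect_sym; apply: wlog_le => //; first by rewrite Gsym.
  by rewrite eq_sym.
move=> Gxy; rewrite eq_blocks => ne.
have lt_xy : tau x < tau y by rewrite ltn_neqAle le_xy andbT; apply: contraNneq ne => ->.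
case: (G_short Gxy) => [[_ lt_yx] | [wr [[x_lo y_hi] | [y_lo x_hi]]]].
- exact: cross_short_edge.
- exact: cross_wrap_edge.
- have Gyx : G y x by rewrite Gsym.
  by have [] := cross_wrap_edge Gyx wr y_lo x_hi; rewrite set2C Fconnect_sym.
Qed.

Lemma snake_block_lt (i : 'I_k) (r : 'I_s) : i * s + r < k * s.
Proof.
have : i.+1 * s <= k * s by rewrite leq_mul2r ltn_ord orbT.
by rewrite mulSn; have := ltn_ord r; lia.
Qed.

Lemma part_blocks (i : 'I_k) : part blocks i = [set sigma (i * s + r) | r : 'I_s].
Proof.
apply/setP => x; rewrite inE; apply/eqP/imsetP => [<- | [r _ ->]].
  exists (Ordinal (ltn_pmod (tau x) s_gt0)) => //=.
  by rewrite blocksE -divn_eq tauK.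
apply: val_inj; rewrite /= blocksE sigmaK ?snake_block_lt //.
by rewrite (@divn_block _ i) ?leq_addr // ltn_add2l.
Qed.

Lemma card_part_blocks (i : 'I_k) : #|part blocks i| = s.
Proof.
rewrite part_blocks card_imset ?card_ord // => r1 r2 /(congr1 tau).
by rewrite !sigmaK ?snake_block_lt // => /addnI /val_inj.
Qed.

Lemma blocks_kpartition : is_kpartition blocks.
Proof. by apply/forallP => i; rewrite -card_gt0 card_part_blocks. Qed.

Lemma blocks_balanced : is_balanced blocks.
Proof. by apply/forallP => i; apply/forallP => j; rewrite !card_part_blocks. Qed.

Lemma card_near_vertices : #|near_vertices| <= k.+1 * (2 * b).
Proof.
rewrite -[k.+1]card_ord -[2 * b]card_ord -card_prod -cardsT.
apply: leq_trans (leq_imset_card (fun q : 'I_k.+1 * 'I_(2 * b) => sigma (q.1 * s + q.2 - b)) _).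
apply/subset_leq_card/subsetP => x; rewrite inE => /existsP[i /andP[lo hi]].
have r_lt : tau x + b - i * s < 2 * b by lia.
by apply/imsetP; exists (i, Ordinal r_lt) => //=; rewrite -{1}(tauK x); congr sigma; lia.
Qed.

Lemma card_near_edges : #|near_edges| <= d * (k.+1 * (2 * b)).
Proof.
apply: leq_trans (leq_imset_card _ _) _.
by rewrite cardsX cardsT card_ord mulnC leq_mul2l card_near_vertices orbT.
Qed.

Lemma card_inner_edges : #|inner| <= d * (k * s).
Proof.
have card_V : #|V| <= k * s.
  have tau_inj : injective (fun x => Ordinal (tau_lt x)).
    by move=> x y /(congr1 val) /= xy; rewrite -(tauK x) xy tauK.
  by have := leq_card _ tau_inj; rewrite card_ord.
apply: leq_trans (_ : #|(fun p : V * 'I_d => [set p.1; nb p.1 p.2]) @: setT| <= _).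
  apply/subset_leq_card/subsetP => _ /inner_edgeP[x [y [-> /G_nb[i ->] _]]].
  by apply/imsetP; exists (x, i).
apply: leq_trans (leq_imset_card _ _) _.
by rewrite cardsT card_prod card_ord mulnC leq_mul2l card_V orbT.
Qed.

Lemma card_junction_edges : #|junction_edges| <= k - ~~ wrap.
Proof.
have card_block_junctions : #|block_junctions| <= k.-1.
  by apply: leq_trans (leq_imset_card _ _) _; rewrite card_ord.
rewrite /junction_edges; case: wrap; last by rewrite subn1.
by rewrite cardsU1 subn0 -(prednK k_gt0) -add1n leq_add ?leq_b1.
Qed.

Theorem snake_Z_tree_le :
  Z_tree G k <= 2 ^ (d * (k.+1 * (2 * b))) *
     (\sum_(j < (k - ~~ wrap).+1) 'C(d * (k * s), j)) * k`! * Z_balanced G k /\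
  0 < Z_balanced G k.
Proof.
have [le_Z Zb_gt0] := Z_tree_le_balanced Gsym blocks_kpartition blocks_connected
  blocks_cross_edge blocks_balanced.
split=> //; apply: leq_trans le_Z _; rewrite !leq_mul2r; apply/orP; right.
apply/orP; right; apply: leq_mul; first by rewrite leq_pexp2l // card_near_edges.
exact: card_small_subsets card_inner_edges card_junction_edges.
Qed.

End Snake.

Lemma cart_adj_sym (A B : finType) (GA : rel A) (GB : rel B) :
  symmetric GA -> symmetric GB -> symmetric (cart_adj GA GB).
Proof. by move=> symA symB x y; rewrite /cart_adj (eq_sym x.1) (eq_sym x.2) symA symB. Qed.

Lemma path_adj_sym p : symmetric (path_adj p).
Proof. by move=> i j; rewrite /path_adj orbC. Qed.

Lemma cycle_adj_sym p : symmetric (cycle_adj p).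
Proof. by move=> i j; rewrite /cycle_adj eq_sym orbC. Qed.

Lemma path_adjP p (i j : 'I_p) : path_adj p i j -> i.+1 = j \/ j.+1 = i.
Proof. by case/orP => /eqP; auto. Qed.

Lemma cycle_adjP p (i j : 'I_p) : cycle_adj p i j ->
  [\/ i.+1 = j, j.+1 = i, i.+1 = p /\ j = 0 :> nat | j.+1 = p /\ i = 0 :> nat].
Proof.
case/andP=> _ /orP[] /eqP ij.
  have := ltn_ord i; rewrite leq_eqVlt => /orP[/eqP ip | lt_ip].
    by constructor 3; rewrite ip modnn in ij.
  by constructor 1; rewrite modn_small in ij.
have := ltn_ord j; rewrite leq_eqVlt => /orP[/eqP jp | lt_jp].
  by constructor 4; rewrite jp modnn in ij.
by constructor 2; rewrite modn_small in ij.
Qed.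

Lemma path_cycle_adj p (i j : 'I_p) : path_adj p i j -> cycle_adj p i j.
Proof.
case/orP=> /eqP ij; rewrite /cycle_adj -val_eqE /=; apply/andP; split.
- by apply/eqP; lia.
- by apply/orP; left; rewrite ij modn_small.
- by apply/eqP; lia.
- by apply/orP; right; rewrite ij modn_small.
Qed.

Lemma grid_cyl_adj m n (x y : 'I_m * 'I_n) : grid_graph m n x y -> cyl_graph m n x y.
Proof.
by case/orP => /andP[eq12 adj]; apply/orP; [left | right]; rewrite eq12 ?path_cycle_adj.
Qed.

Section GridSnake.
Variables m n : nat.
Hypotheses (m_gt0 : 0 < m) (n_gt0 : 0 < n).

Local Notation vertex := ('I_m * 'I_n)%type.
Implicit Types x y : vertex.

(* Column c is traversed downwards for even c and upwards for odd c, so that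
   consecutive snake indices are adjacent in the grid. *)
Definition snake_row (c r : nat) := if odd c then m.-1 - r else r.

Definition snake_index (x : vertex) := x.2 * m + snake_row x.2 x.1.

Lemma snake_row_lt c r : r < m -> snake_row c r < m.
Proof. by rewrite /snake_row; case: odd => //; lia. Qed.

Lemma snake_rowK c r : r < m -> snake_row c (snake_row c r) = r.
Proof. by rewrite /snake_row; case: odd => //; lia. Qed.

Definition snake_vertex (j : nat) : vertex :=
  (Ordinal (snake_row_lt (j %/ m) (ltn_pmod j m_gt0)), Ordinal (ltn_pmod (j %/ m) n_gt0)).

Lemma snake_vertexE q r : r < m -> q < n ->
  (snake_vertex (q * m + r)).1 = snake_row q r :> nat /\
  (snake_vertex (q * m + r)).2 = q :> nat.
Proof.
move=> rm qn; have qE : (q * m + r) %/ m = q by rewrite divnMDl // divn_small // addn0.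
by rewrite /= qE modnMDl !modn_small.
Qed.

Lemma snake_index_lt x : snake_index x < m * n.
Proof.
have := snake_row_lt x.2 (ltn_ord x.1).
have : (x.2 : nat).+1 * m <= n * m by rewrite leq_mul2r ltn_ord orbT.
rewrite /snake_index mulSn; lia.
Qed.

Lemma snake_indexK : cancel snake_index snake_vertex.
Proof.
case=> r c; have [rE cE] := snake_vertexE (snake_row_lt c (ltn_ord r)) (ltn_ord c).
apply/eqP; rewrite /snake_index xpair_eqE; apply/andP; split; apply/eqP; apply: ord_inj.
  by rewrite rE snake_rowK.
by rewrite cE.
Qed.

Lemma snake_vertexK j : j < m * n -> snake_index (snake_vertex j) = j.
Proof.
move=> jN; have qn : j %/ m < n by rewrite ltn_divLR // mulnC.
have [rE cE] := snake_vertexE (ltn_pmod j m_gt0) qn.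
by rewrite -divn_eq in rE cE; rewrite /snake_index rE cE snake_rowK ?ltn_pmod // -divn_eq.
Qed.

Lemma snake_adj (H : rel 'I_n) : (forall c c' : 'I_n, c.+1 = c' -> H c c') ->
  forall j, j.+1 < m * n -> cart_adj (path_adj m) H (snake_vertex j) (snake_vertex j.+1).
Proof.
move=> H_next j jN; rewrite (divn_eq j m).
have rm : j %% m < m by rewrite ltn_pmod.
have qn : j %/ m < n by rewrite ltn_divLR // mulnC; apply: ltnW.
move: (j %/ m) (j %% m) rm qn (divn_eq j m) => q r rm qn jE; rewrite jE in jN.
have [xr xc] := snake_vertexE rm qn.
rewrite /cart_adj; have [lt_rm | r_last] := ltnP r.+1 m.
  have [yr yc] := snake_vertexE lt_rm qn; rewrite -addnS.
  apply/orP; right; apply/andP; split; first by apply/eqP; apply: ord_inj; rewrite xc yc.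
  rewrite /path_adj xr yr /snake_row.
  by case: odd; apply/orP; [right | left]; apply/eqP; lia.
have r_m : r = m.-1 by lia.
have E : (q * m + r).+1 = q.+1 * m + 0 by rewrite -addnS r_m prednK // addn0 mulSn addnC.
have q1n : q.+1 < n by move: jN; rewrite E addn0 mulnC ltn_pmul2l.
have [yr yc] := snake_vertexE m_gt0 q1n; rewrite E.
apply/orP; left; apply/andP; split; last by apply: H_next; rewrite xc yc.
apply/eqP; apply: ord_inj; rewrite xr yr /snake_row r_m.
by rewrite /=; case: odd; rewrite ?subnn ?subn0.
Qed.

Definition snake_close (x y : vertex) :=
  snake_index x < snake_index y + 2 * m /\ snake_index y < snake_index x + 2 * m.

Lemma snake_closeC x y : snake_close x y -> snake_close y x.
Proof. by case. Qed.

Lemma snake_close_col x y : x.2 = y.2 -> x.1.+1 = y.1 \/ y.1.+1 = x.1 -> snake_close x y.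
Proof.
case: x y => [r c] [r' c'] /= <-; have := ltn_ord r; have := ltn_ord r'.
by rewrite /snake_close /snake_index /snake_row /=; case: odd; lia.
Qed.

Lemma snake_close_row x y : x.1 = y.1 -> x.2.+1 = y.2 -> snake_close x y.
Proof.
case: x y => [r c] [r' c'] /= <- cc'.
have := snake_row_lt c (ltn_ord r); have := snake_row_lt c.+1 (ltn_ord r).
by rewrite /snake_close /snake_index /= -cc' mulSn; lia.
Qed.

Lemma grid_snake_close x y : grid_graph m n x y -> snake_close x y.
Proof.
case/orP => /andP[/eqP eq12 /path_adjP adj]; last exact: snake_close_col.
case: adj => [xy | yx]; first exact: snake_close_row.
exact/snake_closeC/(snake_close_row (esym eq12)).
Qed.

Lemma cyl_snake_close x y : cyl_graph m n x y -> snake_close x y \/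
  (snake_index x < 2 * m /\ m * n - 2 * m <= snake_index y \/
   snake_index y < 2 * m /\ m * n - 2 * m <= snake_index x).
Proof.
move=> xy; have := snake_row_lt y.2 (ltn_ord y.1); have := snake_row_lt x.2 (ltn_ord x.1).
case/orP: xy => /andP[/eqP eq12 adj]; last by left; apply/snake_close_col/path_adjP.
case: (cycle_adjP adj) => [xy | yx | [xn y0] | [yn x0]].
- by left; apply: snake_close_row.
- by left; apply/snake_closeC/snake_close_row.
- have : (x.2 : nat) * m + m = n * m by rewrite addnC -mulSn xn.
  by rewrite /snake_index y0 mul0n add0n; lia.
- have : (y.2 : nat) * m + m = n * m by rewrite addnC -mulSn yn.
  by rewrite /snake_index x0 mul0n add0n; lia.
Qed.

Definition grid_neighbour (x : vertex) (i : 'I_6) : vertex :=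
  match val i with
  | 0 => (Ordinal (ltn_pmod x.1.+1 m_gt0), x.2)
  | 1 => (Ordinal (ltn_pmod x.1.-1 m_gt0), x.2)
  | 2 => (x.1, Ordinal (ltn_pmod x.2.+1 n_gt0))
  | 3 => (x.1, Ordinal (ltn_pmod x.2.-1 n_gt0))
  | 4 => (x.1, Ordinal (ltn_pmod 0 n_gt0))
  | _ => (x.1, Ordinal (ltn_pmod n.-1 n_gt0))
  end.

Lemma cyl_neighbour x y : cyl_graph m n x y -> exists i, y = grid_neighbour x i.
Proof.
case: x y => [r c] [r' c']; case/orP => /andP[/eqP /= <-].
- case/cycle_adjP => [cc' | c'c | [cn c'0] | [c'n c0]].
  + exists (Ordinal (isT : 2 < 6)); congr pair; apply: val_inj => /=.
    by rewrite cc' modn_small.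
  + exists (Ordinal (isT : 3 < 6)); congr pair; apply: val_inj => /=.
    by rewrite -c'c /= modn_small // ltnW.
  + exists (Ordinal (isT : 2 < 6)); congr pair; apply: val_inj => /=.
    by rewrite cn modnn c'0.
  + exists (Ordinal (isT : 5 < 6)); congr pair; apply: val_inj => /=.
    by rewrite modn_small; lia.
- case/path_adjP => [rr' | r'r].
  + exists (Ordinal (isT : 0 < 6)); congr pair; apply: val_inj => /=.
    by rewrite rr' modn_small.
  + exists (Ordinal (isT : 1 < 6)); congr pair; apply: val_inj => /=.
    by rewrite -r'r /= modn_small // ltnW.
Qed.

End GridSnake.

Lemma leq_expn2r a b e : a <= b -> a ^ e <= b ^ e.
Proof. by move=> ab; case: e => // e; rewrite leq_exp2r. Qed.

Lemma ffact_le_exp n j : n ^_ j <= n ^ j.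
Proof.
elim: j n => // j IH n; rewrite ffactnS expnS leq_mul2l.
by apply/orP; right; apply: leq_trans (IH _) (leq_expn2r _ (leq_pred n)).
Qed.

Lemma fact_le_mul_exp j k : j <= k -> k`! <= j`! * k ^ (k - j).
Proof.
elim: k => [|k IH]; first by rewrite leqn0 => /eqP ->.
rewrite leq_eqVlt => /orP[/eqP -> | jk]; first by rewrite subnn expn0 muln1.
have le_k := IH jk; rewrite factS subSn // expnS mulnCA leq_mul2l; apply/orP; right.
by apply: leq_trans le_k _; rewrite leq_mul2l leq_expn2r ?orbT.
Qed.

Lemma bin_mul_fact_le E j k : j <= k -> 'C(E, j) * k`! <= E ^ j * k ^ (k - j).
Proof.
move=> jk; apply: leq_trans (_ : 'C(E, j) * (j`! * k ^ (k - j)) <= _).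
  by rewrite leq_mul2l fact_le_mul_exp ?orbT.
by rewrite mulnA bin_ffact leq_mul2r ffact_le_exp orbT.
Qed.

Lemma sum_bin_mul_fact_le E K k : K <= k -> k <= E ->
  (\sum_(j < K.+1) 'C(E, j)) * k`! <= K.+1 * (E ^ K * k ^ (k - K)).
Proof.
move=> Kk kE; rewrite big_distrl -[X in X * _](card_ord K.+1) -sum_nat_const.
apply: leq_sum => j _; have jK : j <= K by rewrite -ltnS.
apply: leq_trans (bin_mul_fact_le _ (leq_trans jK Kk)) _.
have -> : k - j = (K - j) + (k - K) by lia.
have -> : E ^ K = E ^ j * E ^ (K - j) by rewrite -expnD subnKC.
by rewrite expnD !mulnA leq_mul2r leq_mul2l leq_expn2r ?orbT.
Qed.

Lemma mul_succ_le_exp4 k : k.+1 * k <= 4 ^ k.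
Proof.
elim: k => // -[|k] IH //.
by rewrite expnS; apply: leq_trans (leq_mul (leqnn 4) IH); nia.
Qed.

Definition grid_const m := 2 ^ (48 * m) * (24 * m).

Lemma grid_const_gt0 m : 0 < m -> 0 < grid_const m.
Proof. by move=> m_gt0; rewrite muln_gt0 expn_gt0 muln_gt0 m_gt0. Qed.

Lemma grid_numeric m n k K : 0 < m -> 0 < k -> k <= n -> K <= k <= K.+1 ->
  2 ^ (6 * (k.+1 * (2 * (2 * m)))) * (\sum_(j < K.+1) 'C(6 * (m * n), j)) * k`!
    <= n ^ K * grid_const m ^ k.
Proof.
move=> m_gt0 k_gt0 kn /andP[Kk kK].
have kE : k <= 6 * (m * n) by apply: (leq_trans kn); rewrite mulnA leq_pmull // muln_gt0 m_gt0.
rewrite -mulnA; apply: leq_trans (leq_mul (leqnn _) (sum_bin_mul_fact_le Kk kE)) _.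
have -> : grid_const m ^ k = 2 ^ (48 * m * k) * 4 ^ k * (6 * m) ^ k.
  have e24 : 24 * m = 4 * (6 * m) by rewrite mulnA.
  by rewrite /grid_const e24 mulnA !expnMn -expnM.
have two : 2 ^ (6 * (k.+1 * (2 * (2 * m)))) <= 2 ^ (48 * m * k) by rewrite leq_exp2l //; nia.
have four : K.+1 * k ^ (k - K) <= 4 ^ k.
  apply: leq_trans (mul_succ_le_exp4 k); have [-> | ltKk] := eqVneq K k.
    by rewrite subnn muln1 leq_pmulr.
  have -> : k - K = 1 by lia.
  by rewrite expn1 leq_mul2r ltnS Kk orbT.
have six : (6 * (m * n)) ^ K <= (6 * m) ^ k * n ^ K.
  by rewrite mulnA expnMn leq_mul2r leq_pexp2l ?orbT // muln_gt0 m_gt0.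
apply: leq_trans (leq_mul two (leq_mul (leqnn K.+1) (leq_mul six (leqnn (k ^ (k - K)))))) _.
by rewrite [X in _ <= X]mulnC -!mulnA leq_mul2l; apply/orP; right; nia.
Qed.

Section GridBounds.
Variables m n k : nat.
Hypotheses (m_gt0 : 0 < m) (k_gt0 : 0 < k) (n_ge : 2 * k <= n) (k_dvd : k %| m * n).

Let n_gt0 : 0 < n. Proof. lia. Qed.
Let s := m * n %/ k.
Let ks : k * s = m * n. Proof. by rewrite mulnC divnK. Qed.
Let b_le_s : 2 * m <= s.
Proof. by rewrite -(leq_pmul2l k_gt0) ks; nia. Qed.
Let s_gt0 : 0 < s. Proof. by apply: leq_trans b_le_s; rewrite muln_gt0 m_gt0. Qed.

Let index_lt (x : 'I_m * 'I_n) : snake_index x < k * s.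
Proof. by rewrite ks snake_index_lt. Qed.
Let vertexK j : j < k * s -> snake_index (snake_vertex m_gt0 n_gt0 j) = j.
Proof. by rewrite ks; apply: snake_vertexK. Qed.

Lemma snake_grid_Z_tree_le (G : rel ('I_m * 'I_n)) (wrap : bool) : symmetric G ->
  (forall j, j.+1 < m * n -> G (snake_vertex m_gt0 n_gt0 j) (snake_vertex m_gt0 n_gt0 j.+1)) ->
  (forall x y, G x y -> snake_close x y \/ (wrap /\
    (snake_index x < 2 * m /\ m * n - 2 * m <= snake_index y \/
     snake_index y < 2 * m /\ m * n - 2 * m <= snake_index x))) ->
  (forall x y, G x y -> exists i, y = grid_neighbour m_gt0 n_gt0 x i) ->
  Z_tree G k <= n ^ (k - ~~ wrap) * grid_const m ^ k * Z_balanced G k /\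
  0 < Z_balanced G k.
Proof.
move=> Gsym G_snake G_short G_nb.
rewrite -ks in G_snake G_short.
have [le_Z Zb_gt0] := snake_Z_tree_le Gsym k_gt0 s_gt0 b_le_s index_lt
  (snake_indexK m_gt0 n_gt0) vertexK G_snake G_short G_nb.
split=> //; apply: leq_trans le_Z _; rewrite ks leq_mul2r; apply/orP; right.
apply: grid_numeric => //; first lia.
by case: (wrap) => /=; lia.
Qed.

Theorem grid_Z_tree_le :
  Z_tree (grid_graph m n) k <= n ^ k.-1 * grid_const m ^ k * Z_balanced (grid_graph m n) k /\
  0 < Z_balanced (grid_graph m n) k.
Proof.
rewrite -subn1; apply: (snake_grid_Z_tree_le (wrap := false)).
- exact: cart_adj_sym (@path_adj_sym m) (@path_adj_sym n).
- by apply: snake_adj => c c' cc'; rewrite /path_adj cc' eqxx.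
- by move=> x y /(grid_snake_close m_gt0 n_gt0) xy; left.
- by move=> x y /grid_cyl_adj; apply: cyl_neighbour.
Qed.

Theorem cyl_Z_tree_le :
  Z_tree (cyl_graph m n) k <= n ^ k * grid_const m ^ k * Z_balanced (cyl_graph m n) k /\
  0 < Z_balanced (cyl_graph m n) k.
Proof.
rewrite -[k in n ^ k]subn0; apply: (snake_grid_Z_tree_le (wrap := true)).
- exact: cart_adj_sym (@path_adj_sym m) (@cycle_adj_sym n).
- by apply: snake_adj => c c' cc'; rewrite path_cycle_adj // /path_adj cc' eqxx.
- by move=> x y /(cyl_snake_close m_gt0 n_gt0)[xy | xy]; [left | right].
- exact: cyl_neighbour.
Qed.

End GridBounds.

Lemma Z_balanced_le_Z_tree (V : finType) (G : rel V) k : Z_balanced G k <= Z_tree G k.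
Proof.
rewrite /Z_balanced /Z_tree [X in X <= _]big_mkcond [X in _ <= X]big_mkcond.
by apply: leq_sum => f _; case: is_kpartition; case: is_balanced.
Qed.

Lemma balanced_fraction_ge (V : finType) (G : rel V) k M :
  Z_tree G k <= M * Z_balanced G k -> 0 < Z_balanced G k ->
  (1 / M%:R <= balanced_fraction G k :> rat)%R.
Proof.
move=> le_Z Zb_gt0; have Zt_gt0 := leq_trans Zb_gt0 (Z_balanced_le_Z_tree G k).
have M_gt0 : 0 < M by move: (leq_trans Zt_gt0 le_Z); rewrite muln_gt0 => /andP[].
rewrite /balanced_fraction ler_pdivlMr ?ltr0n // mul1r mulrC ler_pdivrMr ?ltr0n //.
by rewrite -natrM ler_nat mulnC.
Qed.

Local Open Scope ring_scope.

Theorem theorem5p2 :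
  forall m : nat, (0 < m)%N ->
  exists c C : rat, 0 < c /\ 0 < C /\
    forall k : nat, (0 < k)%N ->
    exists N : nat, forall n : nat, (N <= n)%N -> (k %| m * n)%N ->
      c / ((n%:R) ^+ (k.-1) * C ^+ k) <= balanced_fraction (grid_graph m n) k /\
      c / ((n%:R) ^+ k * C ^+ k) <= balanced_fraction (cyl_graph m n) k.
Proof.
move=> m m_gt0; exists 1, (grid_const m)%:R.
split; first exact: ltr01; split; first by rewrite ltr0n grid_const_gt0.
move=> k k_gt0; exists (2 * k)%N => n n_ge k_dvd; rewrite -!natrX -!natrM.
have [grid_le grid_gt0] := grid_Z_tree_le m_gt0 k_gt0 n_ge k_dvd.
have [cyl_le cyl_gt0] := cyl_Z_tree_le m_gt0 k_gt0 n_ge k_dvd.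
by split; apply: balanced_fraction_ge.
Qed.
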